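(* Let $\omega\in\Omega$ and consider the contours of $\phi(\omega)$. (I) If there exist at least two infinite contours, then there exists an infinite $0$-cluster or an infinite $1$-cluster. (II) If $C_1$ and $C_2$ are two distinct infinite contours, then there exists an infinite cluster incident to $C_1$. (III) If $\xi$ is a cluster incident to two distinct infinite contours, then $\xi$ is infinite. (IV) Suppose $C_1$ is an infinite contour and $\mathcal{C}$ is a nonempty collection of infinite contours with $C_1\notin\mathcal{C}$; let $R$ be the unbounded component of $\mathbb{R}^2\setminus\bigcup_{C\in\mathcal{C}}C$ containing $C_1$. Then there is an infinite cluster contained in $R$.
   Context: Let $G$ be the square grid with vertex set $\mathbb{Z}^2$ and nearest-neighbour edges. The face of $G$ with lower-left corner $(m,n)$ is black if $m+n$ is even, white otherwise. $\Omega\subset\{0,1\}^{\mathbb{Z}^2}$ is the set of $\omega$ such that for every black face the states of its four vertices, listed clockwise from the lower-left corner, form one of $0000,1111,0011,1100,0110,1001$. A cluster of $\omega$ is a maximal $G$-connected set of vertices on which $\omega$ is constant ($0$-cluster or $1$-cluster), infinite if it has infinitely many vertices. Let $\mathbb{L}_1$ have vertices $(m-\tfrac12,n+\tfrac12)$, $m,n$ both even, and $\mathbb{L}_2$ vertices $(m-\tfrac12,n+\tfrac12)$, $m,n$ both odd; in each, two vertices are joined by an edge (a closed segment of length $2$) iff at Euclidean distance $2$. The center of each black face $F$ is the midpoint of exactly one edge $e_1$ of $\mathbb{L}_1$ and one edge $e_2$ of $\mathbb{L}_2$. Define $\phi(\omega)\in\{0,1\}^{E(\mathbb{L}_1)\cup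 E(\mathbb{L}_2)}$: if the configuration around $F$ is $0000$ or $1111$ both $e_1,e_2$ get $0$; if the two upper vertices share a state different from the two lower ones, the horizontal one of $e_1,e_2$ gets $1$, the vertical $0$; if the two left vertices share a state different from the two right ones, the vertical one gets $1$, the horizontal $0$. Edges with value $1$ are present. A contour is a connected component of the set of present edges, viewed as a subset of $\mathbb{R}^2$ (union of its edges); it is infinite if it has infinitely many edges. A cluster is incident to a contour if some vertex of the cluster is at Euclidean distance $\tfrac12$ from some edge (segment) of the contour. *)

From mathcomp Require Import all_boot all_order all_algebra.
From mathcomp Require Import all_classical all_reals all_analysis.
Set Implicit Arguments. Unset Strict Implicit. Unset Printing Implicit Defensive.
Import Order.TTheory GRing.Theory Num.Theory.
Import numFieldTopology.Exports numFieldNormedType.Exports.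
Local Open Scope classical_set_scope.
Local Open Scope ring_scope.

(* Vertices of G are Z^2 = int * int; configurations omega : Z^2 -> {0,1}
   encoded as bool (true = 1). *)
Definition vtx := (int * int)%type.
Definition config := vtx -> bool.

(* the face with lower-left corner (m,n) is black iff m+n is even *)
Definition black (m n : int) : Prop := (2 %| (m + n))%Z.

Definition LL (m n : int) : vtx := (m, n).
Definition UL (m n : int) : vtx := (m, n + 1).
Definition UR (m n : int) : vtx := (m + 1, n + 1).
Definition LR (m n : int) : vtx := (m + 1, n).

Definition allowed (a b c d : bool) : Prop :=
  (a, b, c, d) \in [:: (false, false, false, false); (true, true, true, true);
                      (false, false, true, true); (true, true, false, false);
                      (false, true, true, false); (true, false, false, true)].

Definition in_Omega (w : config) : Prop :=
  forall m n : int, black m n ->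
    allowed (w (LL m n)) (w (UL m n)) (w (UR m n)) (w (LR m n)).

Definition G_adj (u v : vtx) : Prop :=
  (u.1 = v.1 /\ (u.2 - v.2 = 1 \/ v.2 - u.2 = 1)) \/
  (u.2 = v.2 /\ (u.1 - v.1 = 1 \/ v.1 - u.1 = 1)).

Definition G_connected (S : set vtx) : Prop :=
  forall u v, S u -> S v ->
    exists p : seq vtx, [/\ head u p = u, last u p = v,
      (forall x, x \in p -> S x) &
      (forall i, (i.+1 < size p)%N -> G_adj (nth u p i) (nth u p i.+1))].

Definition const_on (w : config) (S : set vtx) : Prop :=
  forall u v, S u -> S v -> w u = w v.

Definition is_cluster (w : config) (xi : set vtx) : Prop :=
  [/\ xi !=set0, G_connected xi, const_on w xi &
      forall S : set vtx, xi `<=` S -> G_connected S -> const_on w S -> S = xi].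

Definition infinite_cluster (w : config) (xi : set vtx) : Prop :=
  is_cluster w xi /\ infinite_set xi.

(* A dual vertex (m - 1/2, n + 1/2) is labelled by (m,n), with m,n both even
   (L1) or both odd (L2).  An edge of L1 or L2 is labelled by its lower/left
   endpoint (m,n) and a direction: horizontal edges join (m,n) to (m+2,n),
   vertical edges join (m,n) to (m,n+2). *)
Record dedge := DEdge { de_m : int; de_n : int; de_horiz : bool }.

Definition is_edge (e : dedge) : Prop :=
  ((2 %| de_m e) && (2 %| de_n e))%Z \/
  (~~ (2 %| de_m e) && ~~ (2 %| de_n e))%Z.

Definition in_L1 (e : dedge) : Prop := ((2 %| de_m e) && (2 %| de_n e))%Z.
Definition in_L2 (e : dedge) : Prop := (~~ (2 %| de_m e) && ~~ (2 %| de_n e))%Z.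

(* lower-left corner of the (black) face whose center is the midpoint of e:
   horizontal edge (m,n): midpoint (m+1/2, n+1/2) -> face (m, n);
   vertical edge (m,n): midpoint (m-1/2, n+3/2) -> face (m-1, n+1). *)
Definition face_of (e : dedge) : int * int :=
  if de_horiz e then (de_m e, de_n e) else (de_m e - 1, de_n e + 1).

Definition present (w : config) (e : dedge) : Prop :=
  is_edge e /\
  let (a, b) := face_of e in
  if de_horiz e then
    [/\ w (UL a b) = w (UR a b), w (LL a b) = w (LR a b) & w (UL a b) <> w (LL a b)]
  else
    [/\ w (LL a b) = w (UL a b), w (LR a b) = w (UR a b) & w (LL a b) <> w (LR a b)].

Section Geometry.
Variable R : realType.

Definition vpt (v : vtx) : R * R := ((v.1)%:~R, (v.2)%:~R).

Definition dseg (e : dedge) : set (R * R) :=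
  if de_horiz e then
    [set p | p.2 = (de_n e)%:~R + 2^-1 /\
             (de_m e)%:~R - 2^-1 <= p.1 <= (de_m e)%:~R + 3 / 2]
  else
    [set p | p.1 = (de_m e)%:~R - 2^-1 /\
             (de_n e)%:~R + 2^-1 <= p.2 <= (de_n e)%:~R + 5 / 2].

Definition present_set (w : config) : set (R * R) :=
  \bigcup_(e in [set e | present w e]) dseg e.

Definition is_contour (w : config) (C : set (R * R)) : Prop :=
  exists2 x, present_set w x & C = connected_component (present_set w) x.

Definition contour_edges (w : config) (C : set (R * R)) : set dedge :=
  [set e | present w e /\ dseg e `<=` C].

Definition infinite_contour (w : config) (C : set (R * R)) : Prop :=
  is_contour w C /\ infinite_set (contour_edges w C).

Definition eucl (p q : R * R) : R :=
  Num.sqrt ((p.1 - q.1) ^+ 2 + (p.2 - q.2) ^+ 2).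

Definition dist_set (p : R * R) (A : set (R * R)) : R :=
  inf [set eucl p q | q in A].

Definition is_incident (w : config) (xi : set vtx) (C : set (R * R)) : Prop :=
  exists v e, [/\ xi v, contour_edges w C e & dist_set (vpt v) (dseg e) = 2^-1].

End Geometry.

(* Let xi be a finite cluster and call a vertex outside xi if a grid path
   avoiding xi joins it to infinity.  The dual edges crossing the grid edges
   between outside and other vertices are present, and an infinite contour E
   - contains one of these outer edges as soon as it reaches a vertex that is
     not outside, for otherwise it would stay among the faces surrounded by xi
     and be finite;
   - contains all of them as soon as it contains one: the indicator of the
     outer edges in E is a closed Z/2 cochain on the grid, whose potential
     vanishes outside and is constant elsewhere.
   Hence a finite cluster touches at most one infinite contour (III).  A grid
   walk from a second infinite contour to a first one ends next to an infinite
   cluster touching the first (I, II), and the vertices of that cluster are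
   joined to the first contour by monochromatic grid edges, which cross no
   contour (IV). *)

From mathcomp Require Import all_boot all_order all_algebra.
From mathcomp Require Import all_classical all_reals all_analysis.
From mathcomp Require Import zify lra.
Import Order.TTheory GRing.Theory Num.Theory.
Import numFieldTopology.Exports numFieldNormedType.Exports.
Local Open Scope classical_set_scope.
Local Open Scope ring_scope.

Set Implicit Arguments. Unset Strict Implicit. Unset Printing Implicit Defensive.

Definition nbr (u : vtx) (d : bool) : vtx :=
  if d then (u.1 + 1, u.2) else (u.1, u.2 + 1).

Definition adj (u v : vtx) : Prop := exists d, v = nbr u d \/ u = nbr v d.

Definition blackb (a b : int) : bool := (2 %| (a + b))%Z.

(* The dual edge crossing the grid edge from [u] to [nbr u d]: its midpoint is
   the center of the black face containing that grid edge. *)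
Definition dual_edge (u : vtx) (d : bool) : dedge :=
  if d then
    if blackb u.1 u.2 then DEdge (u.1 + 1) (u.2 - 1) false
    else DEdge (u.1 + 1) (u.2 - 2) false
  else if blackb u.1 u.2 then DEdge u.1 u.2 true else DEdge (u.1 - 1) u.2 true.

(* The dual vertex (m - 1/2, n + 1/2) is identified with the face with
   lower-left corner (m - 1, n), whose center it is. *)
Definition dend0 (e : dedge) : int * int := (de_m e - 1, de_n e).
Definition dend1 (e : dedge) : int * int :=
  if de_horiz e then (de_m e + 1, de_n e) else (de_m e - 1, de_n e + 2).
Definition dend (e : dedge) (W : int * int) : Prop := W = dend0 e \/ W = dend1 e.
Definition share_end (e e' : dedge) : Prop := exists W, dend e W /\ dend e' W.

Definition face_corner (W : int * int) (v : vtx) : Prop :=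
  [\/ v = W, v = (W.1, W.2 + 1), v = (W.1 + 1, W.2 + 1) | v = (W.1 + 1, W.2)].

Definition face_side (W : int * int) (u : vtx) (d : bool) : Prop :=
  [\/ u = W /\ d = false, u = (W.1 + 1, W.2) /\ d = false,
      u = W /\ d = true | u = (W.1, W.2 + 1) /\ d = true].

Lemma adj_sym u v : adj u v -> adj v u.
Proof. by case=> d [] h; exists d; [right|left]. Qed.

Lemma adj_nbr u d : adj u (nbr u d).
Proof. by exists d; left. Qed.

Lemma pairE (a b c d : int) : a = c -> b = d -> ((a, b) : vtx) = (c, d).
Proof. by move=> -> ->. Qed.

Lemma share_end_sym e e' : share_end e e' -> share_end e' e.
Proof. by case=> W [h1 h2]; exists W. Qed.

Lemma black_edge m n h : blackb m n -> is_edge (DEdge m n h).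
Proof. rewrite /blackb /is_edge /=; lia. Qed.

Lemma present_black_face w e : present w e ->
  blackb (face_of e).1 (face_of e).2 /\ ~~ blackb (dend0 e).1 (dend0 e).2 /\
  ~~ blackb (dend1 e).1 (dend1 e).2.
Proof.
by case: e => m n [] [he _]; move: he; rewrite /is_edge /blackb /face_of /dend0 /dend1 /=; lia.
Qed.

Lemma dual_edge_corners u d :
  face_corner (face_of (dual_edge u d)) u /\ face_corner (face_of (dual_edge u d)) (nbr u d).
Proof.
case: u => a b; rewrite /dual_edge /face_of /face_corner /nbr /=.
case: d; case: (blackb a b) => /=.
- by split; [apply: Or41 | apply: Or44]; apply: pairE; lia.
- by split; [apply: Or42 | apply: Or43]; apply: pairE; lia.
- by split; [apply: Or41 | apply: Or42]; apply: pairE; lia.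
- by split; [apply: Or44 | apply: Or43]; apply: pairE; lia.
Qed.

Lemma corner_dual_edge e v : blackb (face_of e).1 (face_of e).2 ->
  face_corner (face_of e) v -> exists u d, dual_edge u d = e /\ (v = u \/ v = nbr u d).
Proof.
case: e => m n [] /=; rewrite /face_of /face_corner /= => hb.
- have hb' : blackb (m + 1) n = false by move: hb; rewrite /blackb; lia.
  case=> ->.
  + by exists (m, n), false; rewrite /dual_edge /= hb; split => //; left.
  + by exists (m, n), false; rewrite /dual_edge /= hb; split => //; right.
  + exists (m + 1, n), false; rewrite /dual_edge /= hb'; split; last by right.
    by congr DEdge; lia.
  + exists (m + 1, n), false; rewrite /dual_edge /= hb'; split; last by left.
    by congr DEdge; lia.
- have hb' : blackb (m - 1) (n + 1 + 1) = false by move: hb; rewrite /blackb; lia.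
  case=> ->.
  + exists (m - 1, n + 1), true; rewrite /dual_edge /= hb; split; last by left.
    by congr DEdge; lia.
  + exists (m - 1, n + 1 + 1), true; rewrite /dual_edge /= hb'; split; last by left.
    by congr DEdge; lia.
  + exists (m - 1, n + 1 + 1), true; rewrite /dual_edge /= hb'; split; last by right.
    by congr DEdge; lia.
  + exists (m - 1, n + 1), true; rewrite /dual_edge /= hb; split; last by right.
    by congr DEdge; lia.
Qed.

Lemma white_face_side_dend W u d :
  ~~ blackb W.1 W.2 -> face_side W u d -> dend (dual_edge u d) W.
Proof.
case: W => a b /= hW.
have [h1 h2] : blackb (a + 1) b /\ blackb a (b + 1) by move: hW; rewrite /blackb; lia.
rewrite /dend /dend0 /dend1 /dual_edge.
case=> [[-> ->]|[-> ->]|[-> ->]|[-> ->]] /=; rewrite ?(negbTE hW) ?h1 ?h2 /=;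
  first [by right; apply: pairE; lia | by left; apply: pairE; lia].
Qed.

Lemma exists_white_face_side u d : exists W, ~~ blackb W.1 W.2 /\ face_side W u d.
Proof.
case: u => a b; case: d; case hb: (blackb a b).
- exists (a, b - 1); split; first by move: hb; rewrite /blackb /=; lia.
  by apply: Or44; split => //; apply: pairE => /=; lia.
- by exists (a, b); split; [rewrite hb | apply: Or43].
- exists (a - 1, b); split; first by move: hb; rewrite /blackb /=; lia.
  by apply: Or42; split => //; apply: pairE => /=; lia.
- by exists (a, b); split; [rewrite hb | apply: Or41].
Qed.

Lemma face_side_corners W u d : face_side W u d -> face_corner W u /\ face_corner W (nbr u d).
Proof.
case: W => a b; rewrite /face_side /face_corner /nbr /=.
by case=> [[-> ->]|[-> ->]|[-> ->]|[-> ->]] /=; split;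
  solve [by apply: Or41 | by apply: Or42 | by apply: Or43 | by apply: Or44].
Qed.

Lemma face_side_change (P : vtx -> Prop) W c c' :
  face_corner W c -> P c -> face_corner W c' -> ~ P c' ->
  exists u d, face_side W u d /\ ~ (P u <-> P (nbr u d)).
Proof.
case: W => a b hc hp hc' hp'.
have [H1|H1] := pselect (P (a, b) <-> P (a, b + 1)); last first.
  by exists (a, b), false; split; [apply: Or41|].
have [H2|H2] := pselect (P (a + 1, b) <-> P (a + 1, b + 1)); last first.
  by exists (a + 1, b), false; split; [apply: Or42|].
have [H3|H3] := pselect (P (a, b) <-> P (a + 1, b)); last first.
  by exists (a, b), true; split; [apply: Or43|].
exfalso; apply: hp'.
have : forall v, face_corner (a, b) v -> P v <-> P (a, b) by move=> v [] -> /=; tauto.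
by move=> hall; apply/(hall _ hc'); apply/(hall _ hc).
Qed.

Lemma present_dual_edge_neq w u d : present w (dual_edge u d) -> w u <> w (nbr u d).
Proof.
case: u => a b.
have [e1 e2 e3 e4] : [/\ a + 1 - 1 = a, b - 2 + 1 = b - 1, b - 1 + 1 = b & a - 1 + 1 = a].
  by split; lia.
rewrite /present /dual_edge /face_of /nbr /LL /UL /UR /LR.
by case: d; case: blackb => /= -[_] [h1 h2 h3] h4; apply: h3; congruence.
Qed.

Section Omega.
Variable w : config.
Hypothesis hw : in_Omega w.

Lemma black_face_horizontal_eq a b : blackb a b ->
  w (a, b) <> w (a, b + 1) \/ w (a + 1, b) <> w (a + 1, b + 1) ->
  w (a, b) = w (a + 1, b) /\ w (a, b + 1) = w (a + 1, b + 1).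
Proof.
move=> /hw; rewrite /allowed /LL /UL /UR /LR.
case: (w (a, b)); case: (w (a, b + 1)); case: (w (a + 1, b + 1)); case: (w (a + 1, b));
by rewrite !inE => // _ [].
Qed.

Lemma black_face_vertical_eq a b : blackb a b ->
  w (a, b) <> w (a + 1, b) \/ w (a, b + 1) <> w (a + 1, b + 1) ->
  w (a, b) = w (a, b + 1) /\ w (a + 1, b) = w (a + 1, b + 1).
Proof.
move=> /hw; rewrite /allowed /LL /UL /UR /LR.
case: (w (a, b)); case: (w (a, b + 1)); case: (w (a + 1, b + 1)); case: (w (a + 1, b));
by rewrite !inE => // _ [].
Qed.

Lemma present_horizontal a b : blackb a b ->
  w (a, b) <> w (a, b + 1) \/ w (a + 1, b) <> w (a + 1, b + 1) ->
  present w (DEdge a b true).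
Proof.
move=> hb hd; split; first exact: black_edge.
rewrite /face_of /LL /UL /UR /LR /=.
have [h1 h2] := black_face_horizontal_eq hb hd.
by split => // h; case: hd => hd; apply: hd; rewrite -?h1 -?h2 h.
Qed.

Lemma present_vertical a b : blackb a b ->
  w (a, b) <> w (a + 1, b) \/ w (a, b + 1) <> w (a + 1, b + 1) ->
  present w (DEdge (a + 1) (b - 1) false).
Proof.
move=> hb hd; split; first by apply: black_edge; move: hb; rewrite /blackb; lia.
rewrite /face_of /LL /UL /UR /LR /= addrK subrK.
have [h1 h2] := black_face_vertical_eq hb hd.
by split => // h; case: hd => hd; apply: hd; rewrite -?h1 -?h2 h.
Qed.

Lemma present_dual_edgeP u d : present w (dual_edge u d) <-> w u <> w (nbr u d).
Proof.
split; first exact: present_dual_edge_neq.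
case: u => a b; rewrite /dual_edge /nbr /=; case: d; case hb: (blackb a b) => /= hd.
- by apply: present_vertical => //; left.
- have -> : b - 2 = b - 1 - 1 by lia.
  apply: present_vertical; first by move: hb; rewrite /blackb; lia.
  by right; rewrite subrK.
- by apply: present_horizontal => //; left.
- apply: present_horizontal; first by move: hb; rewrite /blackb; lia.
  by right; rewrite subrK.
Qed.

End Omega.

Lemma present_dend_corners w e : present w e -> exists c1 c2,
  [/\ face_corner (dend0 e) c1, face_corner (dend1 e) c2,
      c2 = nbr c1 (de_horiz e) & w c1 = w c2].
Proof.
case: e => m n [] [_];
  rewrite /face_of /dend0 /dend1 /face_corner /nbr /LL /UL /UR /LR /= => -[h1 h2 h3].
- exists (m, n), (m + 1, n); split => //; last exact: Or41.
  by apply: Or44; apply: pairE => /=; lia.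
- exists (m - 1, n + 1), (m - 1, n + 1 + 1); split => //; first exact: Or42.
  by apply: Or41; apply: pairE => /=; lia.
Qed.

Section Potential.
Variables (K : vtx -> bool -> bool) (N : int).
Hypothesis K_right : forall u d, N < u.1 -> K u d = false.
Hypothesis K_closed : forall u,
  K u true (+) K (nbr u false) true (+) K u false (+) K (nbr u true) false = false.

Fixpoint row_sum (n : nat) (y : int) : bool :=
  if n is n'.+1 then K (N - n'%:Z, y) true (+) row_sum n' y else false.

(* The sum of [K] along the horizontal edges from [u] to column [N + 1]. *)
Definition potential (u : vtx) : bool :=
  if (u.1 <= N + 1)%R then row_sum (absz (N + 1 - u.1)%R) u.2 else false.

Lemma potential_right u : N < u.1 -> potential u = false.
Proof.
case: u => x y /= h; rewrite /potential /=.
by case: ifP => // hx; have -> : absz (N + 1 - x)%R = 0%N by lia.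
Qed.

Lemma potential_horizontal u : potential u (+) potential (nbr u true) = K u true.
Proof.
case: u => x y; rewrite /nbr /=.
have [hx|hx] := leP x N; last by rewrite !potential_right ?K_right //=; lia.
rewrite /potential /=.
have -> : (x <= N + 1) = true by lia.
have -> : (x + 1 <= N + 1) = true by lia.
have -> : absz (N + 1 - x)%R = (absz (N - x)%R).+1 by lia.
have -> : absz (N + 1 - (x + 1))%R = absz (N - x)%R by lia.
rewrite /= -addbA addbb addbF.
by have -> : N - (absz (N - x)%R)%:Z = x by lia.
Qed.

Lemma row_sum_vertical n y : row_sum n y (+) row_sum n (y + 1) = K (N + 1 - n%:Z, y) false.
Proof.
elim: n y => [|n IH] y /=; first by rewrite K_right //=; lia.
have := K_closed (N - n%:Z, y); rewrite /nbr /=.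
have -> : N - n%:Z + 1 = N + 1 - n%:Z by lia.
rewrite -IH.
have -> : N + 1 - n.+1%:Z = N - n%:Z by lia.
by case: (K _ true); case: (K _ true); case: (K _ false); case: (row_sum n y);
  case: (row_sum n (y + 1)).
Qed.

Lemma potential_vertical u : potential u (+) potential (nbr u false) = K u false.
Proof.
case: u => x y; rewrite /nbr /potential /=.
case: ifP => hx; last by rewrite K_right //=; lia.
rewrite row_sum_vertical.
by have -> : N + 1 - (absz (N + 1 - x)%R)%:Z = x by lia.
Qed.

Lemma potential_nbr u d : potential u (+) potential (nbr u d) = K u d.
Proof. by case: d; [apply: potential_horizontal | apply: potential_vertical]. Qed.

End Potential.

Inductive cluster_of (w : config) (v : vtx) : vtx -> Prop :=
| cluster_of_refl : cluster_of w v v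
| cluster_of_step u u' : cluster_of w v u -> adj u u' -> w u = w u' -> cluster_of w v u'.

(* When [xi] lies in the box of size [N], these are the vertices of the
   unbounded component of the complement of [xi]. *)
Inductive outside (xi : set vtx) (N : int) : vtx -> Prop :=
| outside_right v : ~ xi v -> N < v.1 -> outside xi N v
| outside_step u v : ~ xi u -> adj u v -> outside xi N v -> outside xi N u.

Definition in_box (N : int) (v : vtx) : Prop := -N <= v.1 <= N /\ -N <= v.2 <= N.

Lemma cluster_of_color w v u : cluster_of w v u -> w u = w v.
Proof. by elim=> // a a' _ IH _ <-. Qed.

Lemma cluster_of_cons w v v' u :
  adj v v' -> w v = w v' -> cluster_of w v' u -> cluster_of w v u.
Proof.
move=> ha hw; elim=> [|a a' _ IH ha' hw']; last exact: cluster_of_step IH ha' hw'.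
exact: cluster_of_step (cluster_of_refl _ _) ha hw.
Qed.

Lemma cluster_of_sym w v u : cluster_of w v u -> cluster_of w u v.
Proof.
elim=> [|a a' _ IH ha hw]; first exact: cluster_of_refl.
exact: cluster_of_cons (adj_sym ha) (esym hw) IH.
Qed.

Lemma cluster_of_trans w a b c : cluster_of w a b -> cluster_of w b c -> cluster_of w a c.
Proof. by move=> h1; elim=> // u u' _ IH ha hw; apply: cluster_of_step IH ha hw. Qed.

Lemma finite_in_box (A : set vtx) : finite_set A -> exists N, forall v, A v -> in_box N v.
Proof.
move/finite_seqP => [s ->].
suff [N [_ hN]] : exists N : int, 0 <= N /\ forall v, v \in s -> in_box N v.
  by exists N.
elim: s => [|x s [N [hN0 hN]]]; first by exists 0.
exists (N + (absz x.1)%:Z + (absz x.2)%:Z); split; first lia.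
move=> v; rewrite inE => /orP [/eqP ->|/hN]; rewrite /in_box.
  by case: x => x1 x2 /=; lia.
by case: v => v1 v2 /=; case: x => x1 x2 /=; lia.
Qed.

Section Outside.
Variables (w : config) (b0 : vtx) (N : int).
Local Notation xi := (cluster_of w b0).
Hypothesis xi_box : forall v, xi v -> in_box N v.
Local Notation Out := (outside xi N).

Lemma outside_notin v : Out v -> ~ xi v.
Proof. by case. Qed.

Lemma not_outside v : xi v -> ~ Out v.
Proof. by move=> h /outside_notin. Qed.

Lemma outside_of_right v : N < v.1 -> Out v.
Proof.
by case: v => x y /= hv; apply: outside_right => // /xi_box; rewrite /in_box /=; lia.
Qed.

Lemma outside_same_color u v : adj u v -> w u = w v -> (Out u <-> Out v).
Proof.
suff H : forall u v, adj u v -> w u = w v -> Out u -> Out v.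
  by move=> ha he; split; [exact: H | exact: H (adj_sym ha) (esym he)].
move=> a c ha he hs; apply: (outside_step _ (adj_sym ha) hs) => hx.
by apply: (outside_notin hs); apply: cluster_of_step hx (adj_sym ha) (esym he).
Qed.

Lemma outside_of_row k (v : vtx) : (N < v.2 \/ v.2 < -N) -> N - v.1 < k%:Z -> Out v.
Proof.
elim: k v => [|k IH] [x y] /= hy hk; first by apply: outside_of_right => /=; lia.
have [h|h] := ltP N x; first exact: outside_of_right.
apply: outside_step (adj_nbr (x, y) true) _; last by apply: IH => /=; lia.
by move=> /xi_box; rewrite /in_box /=; lia.
Qed.

Lemma outside_of_column k (v : vtx) : v.1 < -N -> N - v.2 < k%:Z -> Out v.
Proof.
elim: k v => [|k IH] [x y] /= hx hk.
  by apply: (@outside_of_row (absz (N - x + 1)%R)) => /=; lia.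
have [h|h] := ltP N y; first by apply: (@outside_of_row (absz (N - x + 1)%R)) => /=; lia.
apply: outside_step (adj_nbr (x, y) false) _; last by apply: IH => /=; lia.
by move=> /xi_box; rewrite /in_box /=; lia.
Qed.

Lemma in_box_not_outside v : ~ Out v -> in_box N v.
Proof.
case: v => x y hs; rewrite /in_box /=.
have [h|h] := ltP N x; first by case: hs; apply: outside_of_right.
have [h'|h'] := ltP x (-N).
  by case: hs; apply: (@outside_of_column (absz (N - y + 1)%R)) => /=; lia.
have [h''|h''] := ltP N y; first by case: hs; apply: (@outside_of_row (absz (N - x + 1)%R)) => /=; lia.
have [h'''|h'''] := ltP y (-N); last by lia.
by case: hs; apply: (@outside_of_row (absz (N - x + 1)%R)) => /=; lia.
Qed.

End Outside.

Lemma finite_int_interval (N : int) : finite_set [set k : int | -N <= k <= N].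
Proof.
apply: (@sub_finite_set _ _ [set -N + i%:Z | i in `I_(absz (N + N + 1)%R)]).
  move=> k /= hk; exists (absz (k + N)%R); first by rewrite /= /mkset; lia.
  by rewrite /=; lia.
by apply: finite_image; exact: finite_II.
Qed.

Lemma finite_dedges_in_box (N : int) : finite_set [set e | in_box N (dend0 e)].
Proof.
apply: (@sub_finite_set _ _ [set DEdge (t.1.1 + 1) t.1.2 t.2 |
   t in ([set k : int | -N <= k <= N] `*` [set k : int | -N <= k <= N]) `*` [set: bool]]).
  case=> m n h [/= h1 h2]; exists ((m - 1, n), h); first by split.
  by rewrite /= subrK.
apply: finite_image; apply: finite_setX; last exact: finite_finset.
by apply: finite_setX; apply: finite_int_interval.
Qed.

(* The combinatorial content of an infinite contour: present dual edges,
   closed under adding present edges with a common endpoint, and connected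
   through common endpoints. *)
Record edge_contour (w : config) (E : set dedge) : Prop := EdgeContour {
  edge_contour_present : forall e, E e -> present w e;
  edge_contour_closed : forall e e', E e -> present w e' -> share_end e e' -> E e';
  edge_contour_ind : forall Q : dedge -> Prop,
    (forall e e', E e -> E e' -> share_end e e' -> Q e -> Q e') ->
    forall e e', E e -> E e' -> Q e -> Q e';
  edge_contour_infinite : infinite_set E }.

Definition incident_to (E : set dedge) (v : vtx) : Prop :=
  exists u d, (v = u \/ v = nbr u d) /\ E (dual_edge u d).

Lemma asbool_not_iff (P Q : Prop) : `[< ~ (P <-> Q) >] = `[< P >] (+) `[< Q >].
Proof.
case: (asboolP P) => hp; case: (asboolP Q) => hq /=.
- by apply: asboolF => h; apply: h.
- by apply: asboolT => -[h _]; apply: hq; apply: h.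
- by apply: asboolT => -[_ h]; apply: hp; apply: h.
- by apply: asboolF => h; apply: h; split.
Qed.

Lemma dual_edge_black_face a b : blackb a b ->
  dual_edge (a, b) true = dual_edge (a, b + 1) true /\
  dual_edge (a, b) false = dual_edge (a + 1, b) false.
Proof.
rewrite /dual_edge /= => hb; rewrite hb.
have [-> ->] : blackb a (b + 1) = false /\ blackb (a + 1) b = false.
  by move: hb; rewrite /blackb; lia.
by split; congr DEdge; lia.
Qed.

Section OuterBoundary.
Variables (w : config) (b0 : vtx) (N : int).
Hypothesis hw : in_Omega w.
Local Notation xi := (cluster_of w b0).
Hypothesis xi_box : forall v, xi v -> in_box N v.
Local Notation Out := (outside xi N).

Definition outer_edge (u : vtx) (d : bool) : Prop := ~ (Out u <-> Out (nbr u d)).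

Definition face_inside (W : int * int) : Prop := forall c, face_corner W c -> ~ Out c.

Lemma outer_edge_neq u d : outer_edge u d -> w u <> w (nbr u d).
Proof. by move=> hd he; apply: hd; apply: outside_same_color (adj_nbr u d) he. Qed.

Lemma outer_edge_present u d : outer_edge u d -> present w (dual_edge u d).
Proof. by move/outer_edge_neq/(present_dual_edgeP hw). Qed.

Lemma outer_edge_black_face_h a b :
  blackb a b -> outer_edge (a, b) true <-> outer_edge (a, b + 1) true.
Proof.
move=> hb.
have H : outer_edge (a, b) true \/ outer_edge (a, b + 1) true ->
    (Out (a, b) <-> Out (a, b + 1)) /\ (Out (a + 1, b) <-> Out (a + 1, b + 1)).
  move=> hd.
  have [h1 h2] : w (a, b) = w (a, b + 1) /\ w (a + 1, b) = w (a + 1, b + 1).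
    by apply: (black_face_vertical_eq hw hb); case: hd => /outer_edge_neq; [left|right].
  by split; apply: outside_same_color; rewrite ?h1 ?h2 //; apply: (adj_nbr _ false).
by rewrite /outer_edge /=; split => hd;
  [have := H (or_introl hd) | have := H (or_intror hd)]; tauto.
Qed.

Lemma outer_edge_black_face_v a b :
  blackb a b -> outer_edge (a, b) false <-> outer_edge (a + 1, b) false.
Proof.
move=> hb.
have H : outer_edge (a, b) false \/ outer_edge (a + 1, b) false ->
    (Out (a, b) <-> Out (a + 1, b)) /\ (Out (a, b + 1) <-> Out (a + 1, b + 1)).
  move=> hd.
  have [h1 h2] : w (a, b) = w (a + 1, b) /\ w (a, b + 1) = w (a + 1, b + 1).
    by apply: (black_face_horizontal_eq hw hb); case: hd => /outer_edge_neq; [left|right].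
  by split; apply: outside_same_color; rewrite ?h1 ?h2 //; apply: (adj_nbr _ true).
by rewrite /outer_edge /=; split => hd;
  [have := H (or_introl hd) | have := H (or_intror hd)]; tauto.
Qed.

Variable E : set dedge.
Hypothesis hE : edge_contour w E.

Lemma contour_outer_edge_on_face e W c c' : E e -> dend e W ->
  face_corner W c -> Out c -> face_corner W c' -> ~ Out c' ->
  exists u d, outer_edge u d /\ E (dual_edge u d).
Proof.
move=> he hW hc hs hc' hs'.
have [u [d [hside hd]]] := face_side_change hc hs hc' hs'.
exists u, d; split => //.
apply: (edge_contour_closed hE he (outer_edge_present hd)); exists W; split => //.
apply: white_face_side_dend hside.
have [_ [h0 h1]] := present_black_face (edge_contour_present hE he).
by case: hW => ->.
Qed.

Section NoOuterEdge.
Hypothesis no_outer : forall u d, outer_edge u d -> ~ E (dual_edge u d).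

(* The two end faces of a contour edge contain the two ends of a monochromatic
   grid edge, so the outside cannot meet one end face without meeting the other. *)
Lemma face_inside_dend e W W' :
  E e -> dend e W -> dend e W' -> face_inside W -> face_inside W'.
Proof.
move=> he hW hW' hX.
have [c1 [c2 [hc1 hc2 hn heq]]] := present_dend_corners (edge_contour_present hE he).
have hS12 : Out c1 <-> Out c2 by apply: outside_same_color heq; rewrite hn; apply: adj_nbr.
suff [c [hc hcX]] : exists c, face_corner W' c /\ ~ Out c.
  move=> c' hc' hs'.
  have [u [d [h1 h2]]] := contour_outer_edge_on_face he hW' hc' hs' hc hcX.
  exact: no_outer h1 h2.
move: hX; case: hW => -> hX; case: hW' => ->.
- by exists c1; split => //; apply: hX.
- by exists c2; split => //; move/hS12; apply: hX.
- by exists c1; split => //; move/hS12; apply: hX.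
- by exists c2; split => //; apply: hX.
Qed.

Lemma contour_not_inside e0 W : E e0 -> dend e0 W -> ~ face_inside W.
Proof.
move=> he0 hW hX.
pose Q e := face_inside (dend0 e) /\ face_inside (dend1 e).
have Q_dend e W' : E e -> dend e W' -> face_inside W' -> Q e.
  by move=> he hW' hX'; split; apply: (face_inside_dend he hW'); rewrite // /dend; tauto.
have hQ e : E e -> Q e.
  move=> he; apply: (edge_contour_ind hE _ he0 he (Q_dend _ _ he0 hW hX)).
  move=> a a' ha ha' [W' [h1 h2]] [q0 q1].
  by apply: (Q_dend _ W') => //; case: h1 => ->.
apply: (edge_contour_infinite hE); apply: sub_finite_set (finite_dedges_in_box N).
move=> e /hQ [h0 _]; apply: (in_box_not_outside xi_box).
by apply: h0; apply: Or41.
Qed.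

End NoOuterEdge.

(* The outer boundary of a finite cluster [xi] surrounds it, so an infinite
   contour reaching a vertex not outside [xi] must cross it. *)
Lemma contour_meets_outer_boundary u0 d0 : E (dual_edge u0 d0) ->
  ~ Out u0 \/ ~ Out (nbr u0 d0) -> exists u d, outer_edge u d /\ E (dual_edge u d).
Proof.
move=> he0 hn0; apply: contrapT => hne.
have no_outer u d : outer_edge u d -> ~ E (dual_edge u d).
  by move=> h1 h2; apply: hne; exists u, d.
have [hu0 hnu0] : ~ Out u0 /\ ~ Out (nbr u0 d0).
  have : ~ outer_edge u0 d0 by move=> h; exact: no_outer h he0.
  by rewrite /outer_edge; case: hn0; tauto.
have [W [hW hside]] := exists_white_face_side u0 d0.
have hends := white_face_side_dend hW hside.
have [hc1 hc2] := face_side_corners hside.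
apply: (contour_not_inside no_outer he0 hends) => c hc hs.
have [u [d [h1 h2]]] := contour_outer_edge_on_face he0 hends hc hs hc1 hu0.
exact: no_outer h1 h2.
Qed.

Definition outer_in_contour (u : vtx) (d : bool) : bool :=
  `[< outer_edge u d /\ E (dual_edge u d) >].

Lemma outer_in_contour_right u d : N < u.1 -> outer_in_contour u d = false.
Proof.
move=> hu; apply: asboolF => -[hd _]; apply: hd.
have hn : N < (nbr u d).1 by case: u hu => x y; case: d => /=; lia.
by split=> _; apply: outside_of_right.
Qed.

Lemma outer_in_contour_white_face W : ~~ blackb W.1 W.2 ->
  (exists s d, face_side W s d /\ outer_in_contour s d) ->
  forall s d, face_side W s d -> outer_in_contour s d = `[< outer_edge s d >].
Proof.
move=> hW [s0 [d0 [hs0 /asboolP [hd0 he0]]]] s d hs.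
apply: asbool_equiv_eq; split => [[]//|hd]; split => //.
apply: (edge_contour_closed hE he0 (outer_edge_present hd)).
by exists W; split; apply: white_face_side_dend.
Qed.

Lemma outer_in_contour_closed u :
  outer_in_contour u true (+) outer_in_contour (nbr u false) true (+)
  outer_in_contour u false (+) outer_in_contour (nbr u true) false = false.
Proof.
case: u => a b; rewrite /nbr /=.
case hb: (blackb a b).
  have [e1 e2] := dual_edge_black_face hb.
  have k1 : outer_in_contour (a, b) true = outer_in_contour (a, b + 1) true.
    rewrite /outer_in_contour e1; apply: asbool_equiv_eq.
    by have := outer_edge_black_face_h hb; tauto.
  have k2 : outer_in_contour (a, b) false = outer_in_contour (a + 1, b) false.
    rewrite /outer_in_contour e2; apply: asbool_equiv_eq.
    by have := outer_edge_black_face_v hb; tauto.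
  by rewrite k1 k2 addbb addFb addbb.
have hW : ~~ blackb (a, b).1 (a, b).2 by rewrite hb.
have i1 : face_side (a, b) (a, b) true by apply: Or43.
have i2 : face_side (a, b) (a, b + 1) true by apply: Or44.
have i3 : face_side (a, b) (a, b) false by apply: Or41.
have i4 : face_side (a, b) (a + 1, b) false by apply: Or42.
have [hex|hex] := pselect (exists s d, face_side (a, b) s d /\ outer_in_contour s d).
  rewrite !(outer_in_contour_white_face hW hex) // /outer_edge /= !asbool_not_iff.
  by case: `[< Out (a, b) >]; case: `[< Out (a, b + 1) >];
    case: `[< Out (a + 1, b) >]; case: `[< Out (a + 1, b + 1) >].
have hF s d : face_side (a, b) s d -> outer_in_contour s d = false.
  by move=> hs; apply/negbTE/negP => hk; apply: hex; exists s, d.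
by rewrite (hF _ _ i1) (hF _ _ i2) (hF _ _ i3) (hF _ _ i4).
Qed.

Local Notation pot := (potential outer_in_contour N).

Lemma potential_outer_in_contour u d : pot u (+) pot (nbr u d) = outer_in_contour u d.
Proof. exact: (potential_nbr outer_in_contour_right outer_in_contour_closed). Qed.

Lemma potential_adj a c : adj a c -> (Out a <-> Out c) -> pot a = pot c.
Proof.
move=> [d [->|->]] hs.
  have : outer_in_contour a d = false by apply: asboolF => -[hd _]; apply: hd.
  by rewrite -potential_outer_in_contour; case: (pot a); case: (pot (nbr a d)).
have : outer_in_contour c d = false.
  by apply: asboolF => -[hd _]; apply: hd; split => h; apply/hs.
by rewrite -potential_outer_in_contour; case: (pot c); case: (pot (nbr c d)).
Qed.

Lemma potential_outside v : Out v -> pot v = false.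
Proof.
elim=> [x _ hx|u v0 hu ha hv IH]; first exact: potential_right.
rewrite -IH; apply: (potential_adj ha).
by split => // _; apply: outside_step hu ha hv.
Qed.

Lemma potential_cluster v : xi v -> pot v = pot b0.
Proof.
elim=> // u u' hu IH ha he; rewrite -IH; apply: esym; apply: (potential_adj ha).
have hu' : xi u' by apply: cluster_of_step hu ha he.
by split => h; [case: (not_outside hu h) | case: (not_outside hu' h)].
Qed.

(* Walking right from a vertex not outside [xi], one stays off the outside
   until one hits [xi]. *)
Lemma potential_not_outside_row k (v : vtx) : ~ Out v -> N - v.1 < k%:Z -> pot v = pot b0.
Proof.
elim: k v => [|k IH] [x y] hs /= hk; first by case: hs; apply: (outside_of_right xi_box) => /=; lia.
have [hx|hx] := pselect (xi (x, y)); first exact: potential_cluster.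
have hs' : ~ Out (nbr (x, y) true).
  by move=> h; apply: hs; apply: (outside_step hx (adj_nbr _ _) h).
rewrite (@potential_adj (x, y) (nbr (x, y) true) (adj_nbr _ _)); last by split.
by apply: IH => //=; lia.
Qed.

Lemma potential_not_outside v : ~ Out v -> pot v = pot b0.
Proof. by move=> hs; apply: (@potential_not_outside_row (absz (N - v.1 + 1))%R) => //; lia. Qed.

Lemma outer_in_contour_outer_edge u d : outer_edge u d -> outer_in_contour u d = pot b0.
Proof.
move=> hd; rewrite -potential_outer_in_contour.
have [hs|hs] := pselect (Out u).
  have hn : ~ Out (nbr u d) by move=> h; apply: hd; split.
  by rewrite (potential_outside hs) (potential_not_outside hn).
have hn : Out (nbr u d) by apply: contrapT => h; apply: hd; split.
by rewrite (potential_outside hn) (potential_not_outside hs) addbF.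
Qed.

Lemma contour_contains_outer_boundary u0 d0 : outer_edge u0 d0 -> E (dual_edge u0 d0) ->
  forall u d, outer_edge u d -> E (dual_edge u d).
Proof.
move=> hd0 he0 u d hd.
have : outer_in_contour u d.
  by rewrite (outer_in_contour_outer_edge hd) -(outer_in_contour_outer_edge hd0); apply/asboolP.
by case/asboolP.
Qed.

Lemma incident_meets_outer_boundary v : incident_to E v -> ~ Out v ->
  exists u d, outer_edge u d /\ E (dual_edge u d).
Proof.
move=> [u [d [hv he]]] hs; apply: (contour_meets_outer_boundary he).
by case: hv => <-; [left | right].
Qed.

Lemma incident_outer_boundary v : incident_to E v -> ~ Out v ->
  forall u d, outer_edge u d -> E (dual_edge u d).
Proof.
move=> hi hs; have [u [d [hd he]]] := incident_meets_outer_boundary hi hs.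
exact: contour_contains_outer_boundary hd he.
Qed.

End OuterBoundary.

Inductive reach_first (I : set vtx) : vtx -> Prop :=
| reach_first_here v : I v -> reach_first I v
| reach_first_step u v : ~ I u -> adj u v -> reach_first I v -> reach_first I u.

Lemma reach_first_all (I : set vtx) t : I t -> forall u, reach_first I u.
Proof.
case: t => a b ht.
suff H : forall (n : nat) (u : vtx), (absz (u.1 - a)%R + absz (u.2 - b)%R <= n)%N ->
    reach_first I u.
  by move=> u; apply: (H _ u (leqnn _)).
elim=> [|n IH] [x y] /= hn.
  by rewrite (_ : (x, y) = (a, b)); [exact: reach_first_here | apply: pairE; lia].
have [hI|hI] := pselect (I (x, y)); first exact: reach_first_here.
have [h1|h1] := ltP x a.
  by apply: reach_first_step hI (adj_nbr (x, y) true) _; apply: IH => /=; lia.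
have [h2|h2] := ltP a x.
  have ha : adj (x, y) (x - 1, y) by exists true; right; rewrite /nbr /=; apply: pairE; lia.
  by apply: reach_first_step hI ha _; apply: IH => /=; lia.
have [h3|h3] := ltP y b.
  by apply: reach_first_step hI (adj_nbr (x, y) false) _; apply: IH => /=; lia.
have [h4|h4] := ltP b y; last first.
  by rewrite (_ : (x, y) = (a, b)); [exact: reach_first_here | apply: pairE; lia].
have ha : adj (x, y) (x, y - 1) by exists false; right; rewrite /nbr /=; apply: pairE; lia.
by apply: reach_first_step hI ha _; apply: IH => /=; lia.
Qed.

Lemma edge_contour_incident w E : edge_contour w E -> exists v, incident_to E v.
Proof.
move=> hE; have [e he] : E !=set0.
  apply/set0P/negP => /eqP h; apply: (edge_contour_infinite hE).
  by rewrite h; apply: finite_set0.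
have [hb _] := present_black_face (edge_contour_present hE he).
have [u [d [hue _]]] := corner_dual_edge hb (Or41 _ _ _ erefl).
by exists u, u, d; split; [left | rewrite hue].
Qed.

Section TwoContours.
Variables (w : config) (E1 E2 : set dedge).
Hypotheses (hw : in_Omega w) (hE1 : edge_contour w E1) (hE2 : edge_contour w E2).

Lemma finite_cluster_incident_contours b v1 v2 :
  finite_set (cluster_of w b) -> cluster_of w b v1 -> cluster_of w b v2 ->
  incident_to E1 v1 -> incident_to E2 v2 -> exists e, E1 e /\ E2 e.
Proof.
move=> /finite_in_box [N hbox] hv1 hv2 hi1 hi2.
have [u [d [hd he]]] := incident_meets_outer_boundary hw hbox hE2 hi2 (not_outside hv2).
exists (dual_edge u d); split => //.
exact: (incident_outer_boundary hw hbox hE1 hi1 (not_outside hv1) hd).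
Qed.

(* No edge of a path reaching [incident_to E1] only at its endpoint [b] is
   outer for the cluster of [b], all of whose outer edges lie in [E1]. *)
Lemma reach_first_not_outside u : reach_first (incident_to E1) u ->
  exists b, incident_to E1 b /\
    forall N, (forall x, cluster_of w b x -> in_box N x) ->
    ~ outside (cluster_of w b) N u.
Proof.
elim=> [v hv|a c ha hac _ [b [hb IH]]].
  by exists v; split => // N _; apply: not_outside; apply: cluster_of_refl.
exists b; split => // N hbox hSa; apply: ha.
have hS := incident_outer_boundary hw hbox hE1 hb (not_outside (cluster_of_refl w b)).
have hSc := IH N hbox.
case: hac => d [hcd|had].
  by exists a, d; split; [left | apply: hS; rewrite /outer_edge -hcd; tauto].
by exists c, d; split; [right | apply: hS; rewrite /outer_edge -had; tauto].
Qed.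

Lemma infinite_cluster_incident : (forall e, E1 e -> E2 e -> False) ->
  exists b, incident_to E1 b /\ infinite_set (cluster_of w b).
Proof.
move=> hdis.
have [v2 hv2] := edge_contour_incident hE2.
have [v1 hv1] := edge_contour_incident hE1.
have [b [hb hnot]] := reach_first_not_outside (reach_first_all hv1 v2).
exists b; split => // /finite_in_box [N hbox].
have [u [d [hd he]]] := incident_meets_outer_boundary hw hbox hE2 hv2 (hnot N hbox).
exact: hdis (incident_outer_boundary hw hbox hE1 hb (not_outside (cluster_of_refl w b)) hd) he.
Qed.

End TwoContours.

Section SegmentGeometry.
Variable R : realType.

Definition face_center (W : int * int) : R * R := (W.1%:~R + 2^-1, W.2%:~R + 2^-1).

Lemma int_le_of_lt_add1 (a b : int) : (a%:~R : R) < b%:~R + 1 -> a <= b.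
Proof. by rewrite -intrD1 ltr_int; lia. Qed.

Lemma dseg_bounds e (p : R * R) : dseg e p ->
  ((dend0 e).1%:~R + 2^-1 <= p.1 <= (dend1 e).1%:~R + 2^-1) /\
  ((dend0 e).2%:~R + 2^-1 <= p.2 <= (dend1 e).2%:~R + 2^-1).
Proof.
case: e => m n [] /=; rewrite /dseg /dend0 /dend1 /= => -[h1 /andP [h2 h3]];
  rewrite ?intrD ?intrB; (split; apply/andP; split); lra.
Qed.

Lemma close_intervals_meet (A B A' B' : int) (x x' : R) :
  A%:~R + 2^-1 <= x -> x <= B%:~R + 2^-1 ->
  A'%:~R + 2^-1 <= x' -> x' <= B'%:~R + 2^-1 -> `|x - x'| < 2^-1 -> A <= B' /\ A' <= B.
Proof.
move=> h1 h2 h3 h4 h5; split; apply: int_le_of_lt_add1.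
  by have := ler_norm (x - x'); lra.
by have := ler_norm (x' - x); rewrite distrC; lra.
Qed.

Lemma dend_center e W : dend e W -> @dseg R e (face_center W).
Proof.
case: e => m n []; rewrite /dend /dend0 /dend1 /dseg /face_center /=;
  case=> ->; rewrite /= ?intrD ?intrB ?rmorphN ?rmorph1;
  (split; [lra | apply/andP; split; lra]).
Qed.

Lemma connected_horizontal_segment (x0 x1 y : R) :
  connected [set p : R * R | p.2 = y /\ x0 <= p.1 <= x1].
Proof.
have -> : [set p : R * R | p.2 = y /\ x0 <= p.1 <= x1] = [set (t, y) | t in `[x0, x1]].
  apply/seteqP; split; first by case=> x y' /= [-> h]; exists x => //; rewrite in_itv.
  by move=> _ [x hx <-] /=; split => //; move: hx; rewrite /= in_itv.
apply: connected_continuous_connected.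
  by apply/connected_intervalP; exact: interval_is_interval.
by apply: continuous_subspaceT => x; exact: (cvg_pair cvg_id (cvg_cst _)).
Qed.

Lemma connected_vertical_segment (x y0 y1 : R) :
  connected [set p : R * R | p.1 = x /\ y0 <= p.2 <= y1].
Proof.
have -> : [set p : R * R | p.1 = x /\ y0 <= p.2 <= y1] = [set (x, t) | t in `[y0, y1]].
  apply/seteqP; split; first by case=> x' y /= [-> h]; exists y => //; rewrite in_itv.
  by move=> _ [y hy <-] /=; split => //; move: hy; rewrite /= in_itv.
apply: connected_continuous_connected.
  by apply/connected_intervalP; exact: interval_is_interval.
by apply: continuous_subspaceT => y; exact: (cvg_pair (cvg_cst _) cvg_id).
Qed.

Lemma dseg_connected e : connected (@dseg R e).
Proof.
case: e => m n []; rewrite /dseg /=;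
  [exact: connected_horizontal_segment | exact: connected_vertical_segment].
Qed.

End SegmentGeometry.

(* A horizontal and a vertical dual edge crossing at their midpoints. *)
Definition crossing (e e' : dedge) : Prop :=
  [/\ de_horiz e, ~~ de_horiz e', de_m e' = de_m e + 1 & de_n e' = de_n e - 1].

Lemma close_dedges e e' : is_edge e -> is_edge e' ->
  (dend0 e).1 <= (dend1 e').1 -> (dend0 e').1 <= (dend1 e).1 ->
  (dend0 e).2 <= (dend1 e').2 -> (dend0 e').2 <= (dend1 e).2 ->
  [\/ e = e', share_end e e', crossing e e' | crossing e' e].
Proof.
case: e => m n h; case: e' => m' n' h'.
rewrite /is_edge /share_end /dend /dend0 /dend1 /crossing /=.
case: h; case: h' => /= he he' h1 h2 h3 h4.
- have [h5|[h5|h5]] : m' = m \/ m' = m + 2 \/ m' = m - 2 by lia.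
  + by apply: Or41; congr DEdge; lia.
  + by apply: Or42; exists (m + 1, n); split; [right|left]; apply: pairE; lia.
  + by apply: Or42; exists (m - 1, n); split; [left|right]; apply: pairE; lia.
- have [h5|[h5|[h5|[h5|h5]]]] : (m' = m /\ n' = n) \/ (m' = m /\ n' = n - 2) \/
     (m' = m + 2 /\ n' = n) \/ (m' = m + 2 /\ n' = n - 2) \/
     (m' = m + 1 /\ n' = n - 1) by lia.
  + by apply: Or42; exists (m - 1, n); split; left; apply: pairE; lia.
  + by apply: Or42; exists (m - 1, n); split; [left|right]; apply: pairE; lia.
  + by apply: Or42; exists (m + 1, n); split; [right|left]; apply: pairE; lia.
  + by apply: Or42; exists (m + 1, n); split; right; apply: pairE; lia.
  + by apply: Or43; split => //; lia.
- have [h5|[h5|[h5|[h5|h5]]]] : (m = m' /\ n = n') \/ (m = m' /\ n = n' - 2) \/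
     (m = m' + 2 /\ n = n') \/ (m = m' + 2 /\ n = n' - 2) \/
     (m = m' + 1 /\ n = n' - 1) by lia.
  + by apply: Or42; exists (m' - 1, n'); split; left; apply: pairE; lia.
  + by apply: Or42; exists (m' - 1, n'); split; [right|left]; apply: pairE; lia.
  + by apply: Or42; exists (m' + 1, n'); split; [left|right]; apply: pairE; lia.
  + by apply: Or42; exists (m' + 1, n'); split; right; apply: pairE; lia.
  + by apply: Or44; split => //; lia.
- have [h5|[h5|h5]] : n' = n \/ n' = n + 2 \/ n' = n - 2 by lia.
  + by apply: Or41; congr DEdge; lia.
  + by apply: Or42; exists (m - 1, n + 2); split; [right|left]; apply: pairE; lia.
  + by apply: Or42; exists (m - 1, n); split; [left|right]; apply: pairE; lia.
Qed.

Lemma present_no_crossing w e e' : present w e -> present w e' -> ~ crossing e e'.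
Proof.
case: e => m n h; case: e' => m' n' h'.
rewrite /crossing /present /face_of /= => -[_ h1] [_ h2] [hh hh' hm hn].
move: hh hh' h1 h2 => -> /negbTE -> /=; rewrite hm hn addrK subrK.
by rewrite /LL /UL /UR /LR => -[_ _ h3] [h4 _ _]; apply: h3; rewrite h4.
Qed.

Section PresentSegments.
Variables (R : realType) (w : config).

Lemma close_present_dedges e e' (p q : R * R) : present w e -> present w e' ->
  dseg e p -> dseg e' q -> `|p.1 - q.1| < 2^-1 -> `|p.2 - q.2| < 2^-1 ->
  e = e' \/ share_end e e'.
Proof.
move=> pe pe' hp hq h1 h2.
have [/andP [a1 a2] /andP [a3 a4]] := dseg_bounds hp.
have [/andP [b1 b2] /andP [b3 b4]] := dseg_bounds hq.
have [c1 c2] := close_intervals_meet a1 a2 b1 b2 h1.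
have [c3 c4] := close_intervals_meet a3 a4 b3 b4 h2.
case: (close_dedges (proj1 pe) (proj1 pe') c1 c2 c3 c4) => [->|hs|hc|hc].
- by left.
- by right.
- by case: (present_no_crossing pe pe' hc).
- by case: (present_no_crossing pe' pe hc).
Qed.

Lemma meet_present_dedges e e' (p : R * R) : present w e -> present w e' ->
  dseg e p -> dseg e' p -> e = e' \/ share_end e e'.
Proof.
by move=> pe pe' hp hq; apply: close_present_dedges pe pe' hp hq _ _;
  rewrite subrr normr0; lra.
Qed.

End PresentSegments.

Section Contours.
Variables (R : realType) (w : config).
Local Notation PS := (@present_set R w).
Implicit Types (C : set (R * R)) (p q : R * R).

Lemma present_dseg_sub e : present w e -> @dseg R e `<=` PS.
Proof. by move=> he p hp; exists e. Qed.

Lemma contour_sub C : is_contour w C -> C `<=` PS.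
Proof. by case=> x _ ->; apply: connected_component_sub. Qed.

Lemma contour_eq C p : is_contour w C -> C p -> C = connected_component PS p.
Proof. by case=> x _ -> hp; apply: same_connected_component. Qed.

Lemma contour_connected C : is_contour w C -> connected C.
Proof. by case=> x _ ->; apply: component_connected. Qed.

Lemma contour_dseg_sub C e p : is_contour w C -> present w e -> C p -> @dseg R e p ->
  @dseg R e `<=` C.
Proof.
move=> hC he hCp hp; rewrite (contour_eq hC hCp).
by apply: connected_component_max => //; [exact: present_dseg_sub | exact: dseg_connected].
Qed.

Lemma contour_edges_closed C e e' : is_contour w C -> contour_edges w C e ->
  present w e' -> share_end e e' -> contour_edges w C e'.
Proof.
move=> hC [he hsub] he' [W [h1 h2]]; split => //.
by apply: (contour_dseg_sub hC he' (hsub _ (dend_center R h1))); exact: dend_center.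
Qed.

(* Points of non-adjacent present dual edges are at distance at least 1/2 in
   one coordinate. *)
Lemma closure_dseg_unions_disjoint (F1 F2 : set dedge) :
  (forall e, F1 e -> present w e) -> (forall e, F2 e -> present w e) ->
  (forall e1 e2, F1 e1 -> F2 e2 -> ~ (e1 = e2 \/ share_end e1 e2)) ->
  closure (\bigcup_(e in F1) @dseg R e) `&` (\bigcup_(e in F2) @dseg R e) = set0.
Proof.
move=> hF1 hF2 hno; apply/seteqP; split => // q [hcl [e2 he2 hq]].
have hB : nbhs q (ball q (2^-1 : R)) by apply: nbhsx_ballx; lra.
have [p [[e1 he1 hp] [b1 b2]]] := hcl _ hB.
rewrite -!ball_normE /ball_ in b1 b2.
apply: (hno e1 e2) => //.
case: (close_present_dedges (hF2 _ he2) (hF1 _ he1) hq hp b1 b2) => [->|h]; first by left.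
by right; apply: share_end_sym.
Qed.

Lemma contour_edges_ind C (Q : dedge -> Prop) : is_contour w C ->
  (forall e e', contour_edges w C e -> contour_edges w C e' -> share_end e e' ->
     Q e -> Q e') ->
  forall e e', contour_edges w C e -> contour_edges w C e' -> Q e -> Q e'.
Proof.
move=> hC hQ e1 e2 he1 he2 hq1; apply: contrapT => hq2.
pose F1 := [set e | contour_edges w C e /\ Q e].
pose F2 := [set e | contour_edges w C e /\ ~ Q e].
have hsep : separated (\bigcup_(e in F1) @dseg R e) (\bigcup_(e in F2) @dseg R e).
  split.
    apply: closure_dseg_unions_disjoint; [by move=> e [[]] | by move=> e [[]] |].
    move=> a b [ha qa] [hb qb] [hab|hab]; first by apply: qb; rewrite -hab.
    by apply: qb; apply: (hQ a b).
  rewrite setIC; apply: closure_dseg_unions_disjoint; [by move=> e [[]] | by move=> e [[]] |].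
  move=> a b [ha qa] [hb qb] [hab|hab]; first by apply: qa; rewrite hab.
  by apply: qa; apply: (hQ b a) => //; apply: share_end_sym.
have hcov : C `<=` (\bigcup_(e in F1) @dseg R e) `|` (\bigcup_(e in F2) @dseg R e).
  move=> p hp; case: (contour_sub hC hp) => e he hpe.
  have hce : contour_edges w C e by split => //; apply: contour_dseg_sub hC he hp hpe.
  by have [qe|qe] := pselect (Q e); [left | right]; exists e.
have hc1 : @dseg R e1 (face_center R (dend0 e1)) by apply: dend_center; left.
have hc2 : @dseg R e2 (face_center R (dend0 e2)) by apply: dend_center; left.
case: (connected_subset hsep hcov (contour_connected hC)) => hsub.
  have [e [he qe] hp] := hsub _ (proj2 he2 _ hc2).
  case: (meet_present_dedges (proj1 he2) (proj1 he) hc2 hp) => [h|h].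
    by apply: hq2; rewrite h.
  by apply: hq2; apply: (hQ e e2) => //; apply: share_end_sym.
have [e [he qe] hp] := hsub _ (proj2 he1 _ hc1).
case: (meet_present_dedges (proj1 he1) (proj1 he) hc1 hp) => [h|h].
  by apply: qe; rewrite -h.
by apply: qe; apply: (hQ e1 e).
Qed.

Lemma infinite_contour_edge_contour C : infinite_contour w C ->
  edge_contour w (contour_edges w C).
Proof.
move=> [hC hinf]; split => //; first by move=> e [].
  by move=> e e' he he' hs; exact: (contour_edges_closed hC he he' hs).
by move=> Q hQ e e' he he'; exact: (contour_edges_ind hC hQ he he').
Qed.

Lemma contours_with_common_edge C1 C2 e : is_contour w C1 -> is_contour w C2 ->
  contour_edges w C1 e -> contour_edges w C2 e -> C1 = C2.
Proof.
move=> h1 h2 [_ s1] [_ s2].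
have hc : @dseg R e (face_center R (dend0 e)) by apply: dend_center; left.
by rewrite (contour_eq h1 (s1 _ hc)) (contour_eq h2 (s2 _ hc)).
Qed.

End Contours.

Section Incidence.
Variable R : realType.

Definition sqr_dist (v : vtx) (p : R * R) : R :=
  (v.1%:~R - p.1) ^+ 2 + (v.2%:~R - p.2) ^+ 2.

Lemma sqr_dist_half_ge (b n : int) : 4^-1 <= ((b%:~R : R) - (n%:~R + 2^-1)) ^+ 2.
Proof.
have [h|h] : b <= n \/ n + 1 <= b by lia.
  by move: h; rewrite -(ler_int R); nra.
by move: h; rewrite -(ler_int R) intrD1; nra.
Qed.

Lemma sqr_dist_half_far (b n : int) : b <> n -> b <> n + 1 ->
  2^-1 <= ((b%:~R : R) - (n%:~R + 2^-1)) ^+ 2.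
Proof.
move=> h1 h2; have [h|h] : b + 1 <= n \/ n + 1 + 1 <= b by lia.
  by move: h; rewrite -(ler_int R) intrD1; nra.
by move: h; rewrite -(ler_int R) !intrD1; nra.
Qed.

Lemma sqr_dist_segment_far (a m : int) (x : R) : m%:~R - 2^-1 <= x -> x <= m%:~R + 3 / 2 ->
  a <> m -> a <> m + 1 -> 4^-1 <= ((a%:~R : R) - x) ^+ 2.
Proof.
move=> h1 h2 h3 h4; have [h|h] : a + 1 <= m \/ m + 1 + 1 <= a by lia.
  by move: h; rewrite -(ler_int R) intrD1; nra.
by move: h; rewrite -(ler_int R) !intrD1; nra.
Qed.

Lemma sqr_dist_dseg e v q : dseg e q ->
  4^-1 <= sqr_dist v q /\ (~ face_corner (face_of e) v -> 2^-1 <= sqr_dist v q).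
Proof.
case: v => a b; case: e => m n [];
  rewrite /dseg /sqr_dist /face_of /face_corner /= => -[-> /andP [h1 h2]].
- split; first by have := sqr_dist_half_ge b n; have := sqr_ge0 ((a%:~R : R) - q.1); lra.
  move=> hnc; have [hb|hb] := pselect (b = n \/ b = n + 1).
    have [ha ha'] : a <> m /\ a <> m + 1.
      by split => ha; apply: hnc; case: hb => ->; rewrite ha;
        [apply: Or41 | apply: Or42 | apply: Or44 | apply: Or43].
    by have := sqr_dist_segment_far h1 h2 ha ha'; have := sqr_dist_half_ge b n; lra.
  have := sqr_dist_half_far (fun h => hb (or_introl h)) (fun h => hb (or_intror h)).
  by have := sqr_ge0 ((a%:~R : R) - q.1); lra.
- have E1 : (m%:~R : R) - 2^-1 = (m - 1)%:~R + 2^-1 by rewrite intrB; lra.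
  have E2 : (n%:~R : R) + 2^-1 = (n + 1)%:~R - 2^-1 by rewrite intrD; lra.
  have E3 : (n%:~R : R) + 5 / 2 = (n + 1)%:~R + 3 / 2 by rewrite intrD; lra.
  rewrite E1; rewrite E2 E3 in h1 h2.
  split.
    by have := sqr_dist_half_ge a (m - 1); have := sqr_ge0 ((b%:~R : R) - q.2); lra.
  move=> hnc; have [ha|ha] := pselect (a = m - 1 \/ a = m - 1 + 1).
    have [hb hb'] : b <> n + 1 /\ b <> n + 1 + 1.
      by split => hb; apply: hnc; case: ha => ->; rewrite hb ?subrK;
        [apply: Or41 | apply: Or44 | apply: Or42 | apply: Or43].
    by have := sqr_dist_segment_far h1 h2 hb hb'; have := sqr_dist_half_ge a (m - 1); lra.
  have := sqr_dist_half_far (fun h => ha (or_introl h)) (fun h => ha (or_intror h)).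
  by have := sqr_ge0 ((b%:~R : R) - q.2); lra.
Qed.

Lemma sqr_dist_corner e v : face_corner (face_of e) v ->
  exists2 q, dseg e q & sqr_dist v q = 4^-1.
Proof.
case: v => a b; case: e => m n []; rewrite /dseg /sqr_dist /face_of /face_corner /=.
- move=> hc; have [ha hb] : (a = m \/ a = m + 1) /\ (b = n \/ b = n + 1).
    by case: hc => -[-> ->]; tauto.
  exists (a%:~R, n%:~R + 2^-1) => /=.
    by split => //; case: ha => ->; rewrite ?intrD; apply/andP; split; lra.
  by case: hb => ->; rewrite ?intrD; lra.
- move=> hc; have [ha hb] : (a = m - 1 \/ a = m - 1 + 1) /\ (b = n + 1 \/ b = n + 1 + 1).
    by case: hc => -[-> ->]; tauto.
  exists (m%:~R - 2^-1, b%:~R) => /=.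
    by split => //; case: hb => ->; rewrite ?intrD; apply/andP; split; lra.
  by case: ha => ->; rewrite ?intrD ?intrB; lra.
Qed.

Lemma sqrt_ge_half (x : R) : 4^-1 <= x -> 2^-1 <= Num.sqrt x.
Proof.
move=> hx; have h0 := sqrtr_ge0 x; have h2 := sqr_sqrtr (le_trans _ hx).
have h : (0 : R) <= 4^-1 by lra.
by move: (h2 h); nra.
Qed.

Lemma sqrt_gt_half (x : R) : 2^-1 <= x -> 2^-1 < Num.sqrt x.
Proof.
move=> hx; have h0 := sqrtr_ge0 x; have h2 := sqr_sqrtr (le_trans _ hx).
have h : (0 : R) <= 2^-1 by lra.
by move: (h2 h); nra.
Qed.

Lemma sqrt_quarter : Num.sqrt (4^-1 : R) = 2^-1.
Proof.
have h0 := sqrtr_ge0 (4^-1 : R).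
have h : (0 : R) <= 4^-1 by lra.
have h2 := sqr_sqrtr h.
by apply/eqP; rewrite eq_le; apply/andP; split; nra.
Qed.

Lemma dist_set_corner e v : face_corner (face_of e) v -> dist_set (vpt R v) (dseg e) = 2^-1.
Proof.
move=> hc; have [q0 hq0 hsq] := sqr_dist_corner hc.
have hlb : lbound [set eucl (vpt R v) q | q in dseg e] (2^-1).
  by move=> _ [q hq <-]; apply: sqrt_ge_half; exact: (sqr_dist_dseg v hq).1.
apply/eqP; rewrite eq_le; apply/andP; split; last first.
  by apply: lb_le_inf => //; exists (eucl (vpt R v) q0), q0.
have <- : eucl (vpt R v) q0 = 2^-1 by rewrite /eucl -/(sqr_dist v q0) hsq sqrt_quarter.
by apply: ge_inf; [exists (2^-1) | exists q0].
Qed.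

Lemma face_corner_of_dist_set e v :
  dist_set (vpt R v) (dseg e) = 2^-1 -> face_corner (face_of e) v.
Proof.
move=> hd; apply: contrapT => hnc.
have hq0 : @dseg R e (face_center R (dend0 e)) by apply: dend_center; left.
have hlb : lbound [set eucl (vpt R v) q | q in dseg e] (Num.sqrt 2^-1).
  by move=> _ [q hq <-]; apply: ler_wsqrtr; exact: (sqr_dist_dseg v hq).2.
have := lb_le_inf (ex_intro _ _ (ex_intro2 _ _ _ hq0 erefl)) hlb.
by rewrite -/(dist_set _ _) hd; have := @sqrt_gt_half (2^-1) (lexx _); lra.
Qed.

End Incidence.

Lemma incident_to_is_incident (R : realType) w (C : set (R * R)) b :
  incident_to (contour_edges w C) b -> is_incident w (cluster_of w b) C.
Proof.
move=> [u [d [hv he]]]; exists b, (dual_edge u d); split => //; first exact: cluster_of_refl.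
by apply: dist_set_corner; have [c1 c2] := dual_edge_corners u d; case: hv => ->.
Qed.

Lemma is_incident_incident_to (R : realType) w (C : set (R * R)) xi :
  is_incident w xi C -> exists2 v, xi v & incident_to (contour_edges w C) v.
Proof.
move=> [v [e [hxi he /face_corner_of_dist_set hc]]]; exists v => //.
have [hb _] := present_black_face he.1.
have [u [d [hue hv]]] := corner_dual_edge hb hc.
by exists u, d; split => //; rewrite hue.
Qed.

Lemma G_adj_adj u v : G_adj u v -> adj u v.
Proof.
case: u => a b; case: v => c d; rewrite /G_adj /adj /nbr /=.
case=> [[-> [h|h]]|[-> [h|h]]].
- by exists false; right; apply: pairE; lia.
- by exists false; left; apply: pairE; lia.
- by exists true; right; apply: pairE; lia.
- by exists true; left; apply: pairE; lia.
Qed.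

Lemma adj_G_adj u v : adj u v -> G_adj u v.
Proof.
case: u => a b; case: v => c d; rewrite /G_adj /adj /nbr /=.
case=> [] [] [] [-> ->] /=; first [by right; split => //; lia | by left; split => //; lia].
Qed.

Definition G_adjb (u v : vtx) : bool := `[< G_adj u v >].

Section Clusters.
Variable w : config.

Lemma path_cluster_of (S : set vtx) x q : const_on w S -> path G_adjb x q ->
  (forall y, y \in x :: q -> S y) -> cluster_of w x (last x q).
Proof.
move=> hc; elim: q x => [|y q IH] x /=; first by move=> _ _; apply: cluster_of_refl.
move=> /andP [/asboolP hxy hp] hS.
have h : cluster_of w y (last y q).
  by apply: IH hp _ => z hz; apply: hS; rewrite inE hz orbT.
apply: cluster_of_cons (G_adj_adj hxy) _ h.
by apply: hc; apply: hS; rewrite ?inE ?eqxx ?orbT.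
Qed.

Lemma G_connected_cluster_of (S : set vtx) u v : G_connected S -> const_on w S ->
  S u -> S v -> cluster_of w u v.
Proof.
move=> hconn hc hu hv; have [[|x q] [/= hh hl hS hadj]] := hconn u v hu hv.
  by rewrite -hl; apply: cluster_of_refl.
rewrite -hl; subst x; apply: (path_cluster_of hc) => //.
by apply/(pathP u) => i hi; apply/asboolP; exact: hadj.
Qed.

Lemma cluster_of_path a v : cluster_of w a v -> exists q,
  [/\ path G_adjb a q, last a q = v & forall x, x \in a :: q -> cluster_of w a x].
Proof.
elim=> [|u u' _ [q [hp hl hin]] ha hw].
  by exists [::]; split => // x; rewrite inE => /eqP ->; apply: cluster_of_refl.
exists (rcons q u'); split.
- by rewrite rcons_path hp hl; apply/asboolP; apply: adj_G_adj.
- by rewrite last_rcons.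
- move=> x; rewrite -rcons_cons mem_rcons inE => /orP [/eqP ->|hx]; last exact: hin.
  by apply: cluster_of_step ha hw; rewrite -hl; apply: hin; exact: mem_last.
Qed.

Lemma cluster_of_is_cluster b : is_cluster w (cluster_of w b).
Proof.
split.
- by exists b; apply: cluster_of_refl.
- move=> a v ha hv.
  have [q [hp hl hin]] := cluster_of_path (cluster_of_trans (cluster_of_sym ha) hv).
  exists (a :: q); split => //.
    by move=> x hx; apply: cluster_of_trans ha (hin x hx).
  by move=> i hi; have /asboolP := pathP a hp i hi.
- by move=> x y hx hy; rewrite (cluster_of_color hx) (cluster_of_color hy).
- move=> S hsub hconn hconst; apply/seteqP; split => // s hs.
  exact: (G_connected_cluster_of hconn hconst (hsub _ (cluster_of_refl w b)) hs).
Qed.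

Lemma is_cluster_cluster_of xi b : is_cluster w xi -> xi b -> xi = cluster_of w b.
Proof.
move=> [_ hconn hconst hmax] hb; apply: esym; apply: hmax.
- by move=> u hu; exact: (G_connected_cluster_of hconn hconst hb hu).
- by case: (cluster_of_is_cluster b).
- by case: (cluster_of_is_cluster b).
Qed.

End Clusters.

Section GridSegments.
Variable R : realType.
Implicit Types (p : R * R).

Definition grid_seg (u : vtx) (d : bool) : set (R * R) :=
  if d then [set p | p.2 = u.2%:~R /\ u.1%:~R <= p.1 <= u.1%:~R + 1]
  else [set p | p.1 = u.1%:~R /\ u.2%:~R <= p.2 <= u.2%:~R + 1].

Lemma grid_seg_connected u d : connected (grid_seg u d).
Proof.
by case: d; [exact: connected_horizontal_segment | exact: connected_vertical_segment].
Qed.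

Lemma grid_seg_ends u d : grid_seg u d (vpt R u) /\ grid_seg u d (vpt R (nbr u d)).
Proof.
by case: u => a b; case: d; rewrite /grid_seg /vpt /nbr /= ?intrD;
  split; split => //; apply/andP; split; lra.
Qed.

Lemma grid_seg_dual_edge u d : exists2 p, grid_seg u d p & dseg (dual_edge u d) p.
Proof.
case: u => a b; case: d; [exists (a%:~R + 2^-1, b%:~R) | exists (a%:~R, b%:~R + 2^-1)];
  rewrite /grid_seg /dual_edge /=; try case: (blackb a b); rewrite /dseg /=;
  rewrite ?intrD ?intrB ?rmorph1 ?rmorphN;
  by split; [ | apply/andP; split]; lra.
Qed.

Lemma lt_int_of_real (a b : int) (x : R) : a%:~R <= x -> x < b%:~R -> a < b.
Proof. by move=> h1 h2; rewrite -(ltr_int R); exact: le_lt_trans h1 h2. Qed.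

Lemma int_neq_half (a b : int) : (a%:~R : R) <> b%:~R + 2^-1.
Proof.
move=> h.
have h1 : a < b + 1 by apply: (@lt_int_of_real _ _ (a%:~R)); rewrite ?intrD1; lra.
have h2 : b < a by apply: (@lt_int_of_real _ _ (b%:~R)); lra.
lia.
Qed.

Lemma grid_seg_dseg u d f p : is_edge f -> grid_seg u d p -> dseg f p -> f = dual_edge u d.
Proof.
case: u => a b; case: f => m n h; case: p => x y.
rewrite /is_edge /grid_seg /dseg /dual_edge /blackb /=.
case: d; case: h => /= he.
- by move=> [hy _] [hy' _]; case: (@int_neq_half b n); rewrite -hy.
- move=> [hy /andP [h1 h2]] [hx /andP [h3 h4]].
  have i1 : a < m by apply: (@lt_int_of_real _ _ x); lra.
  have i2 : m < a + 1 + 1 by apply: (@lt_int_of_real _ _ (x + 2^-1)); rewrite ?intrD1; lra.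
  have i3 : n < b by apply: (@lt_int_of_real _ _ (y - 2^-1)); lra.
  have i4 : b < n + 1 + 1 + 1 by apply: (@lt_int_of_real _ _ y); rewrite ?intrD1; lra.
  by case: ifP => hb; congr DEdge; lia.
- move=> [hx /andP [h1 h2]] [hy /andP [h3 h4]].
  have i1 : b < n + 1 by apply: (@lt_int_of_real _ _ y); rewrite ?intrD1; lra.
  have i2 : n < b + 1 by apply: (@lt_int_of_real _ _ (y - 2^-1)); rewrite ?intrD1; lra.
  have i3 : m - 1 < a by apply: (@lt_int_of_real _ _ (x - 2^-1)); rewrite ?intrB; lra.
  have i4 : a < m + 1 + 1 by apply: (@lt_int_of_real _ _ x); rewrite ?intrD1; lra.
  by case: ifP => hb; congr DEdge; lia.
- move=> [hx _] [hx' _]; case: (@int_neq_half a (m - 1)).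
  by rewrite -hx hx' intrB; lra.
Qed.

Lemma connected_sub_component (A K Rg : set (R * R)) p x :
  Rg = connected_component A p -> connected K -> K `<=` A -> K x -> Rg x -> K `<=` Rg.
Proof.
move=> -> hK hKA hKx hRx; rewrite (same_connected_component hRx).
exact: connected_component_max.
Qed.

Variable w : config.

Lemma grid_seg_contour_edges C u d p : is_contour w C -> grid_seg u d p -> C p ->
  contour_edges w C (dual_edge u d).
Proof.
move=> hC hp hCp; case: (contour_sub hC hCp) => f hf hfp.
rewrite -(grid_seg_dseg hf.1 hp hfp); split => //.
exact: contour_dseg_sub hC hf hCp hfp.
Qed.

(* Each vertex of the cluster is joined to [C1] by a chain of grid edges
   crossing no dual edge except one of [C1]. *)
Lemma cluster_in_region (C1 : set (R * R)) (CC : set (set (R * R))) Rg p b :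
  is_contour w C1 -> (forall C, CC C -> is_contour w C) -> ~ CC C1 ->
  Rg = connected_component (~` \bigcup_(C in CC) C) p -> C1 `<=` Rg ->
  incident_to (contour_edges w C1) b -> forall v, cluster_of w b v -> Rg (vpt R v).
Proof.
move=> hC1 hCC hn1 hRg hsub [u0 [d0 [hb hC1e]]].
have hY u d : w u = w (nbr u d) \/ contour_edges w C1 (dual_edge u d) ->
    grid_seg u d `<=` ~` \bigcup_(C in CC) C.
  move=> hud q hq [C hC hCq].
  have hCe := grid_seg_contour_edges (hCC _ hC) hq hCq.
  case: hud => [he|hC1e']; first exact: present_dual_edge_neq hCe.1 he.
  by apply: hn1; rewrite (contours_with_common_edge hC1 (hCC _ hC) hC1e' hCe).
have hseg u d x : w u = w (nbr u d) \/ contour_edges w C1 (dual_edge u d) ->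
    grid_seg u d x -> Rg x -> grid_seg u d `<=` Rg.
  by move=> hud; apply: connected_sub_component hRg (@grid_seg_connected u d) (hY u d hud).
have [g1 g2] := grid_seg_ends u0 d0.
have [q hq hq'] := grid_seg_dual_edge u0 d0.
have hK : grid_seg u0 d0 `<=` Rg.
  by apply: (hseg u0 d0 q (or_intror hC1e) hq); apply: hsub; apply: hC1e.2.
have hbR : Rg (vpt R b) by apply: hK; case: hb => ->.
move=> v; elim=> [//|u u' _ IH [d [hd|hd]] he].
  have [h1 h2] := grid_seg_ends u d.
  by rewrite hd in he *; apply: (hseg u d _ (or_introl he) h1 IH).
have [h1 h2] := grid_seg_ends u' d.
by rewrite hd in he IH; apply: (hseg u' d _ (or_introl (esym he)) h2 IH).
Qed.

End GridSegments.

Lemma infinite_cluster_incident_contour (R : realType) w (C1 C2 : set (R * R)) :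
  in_Omega w -> infinite_contour w C1 -> infinite_contour w C2 -> C1 <> C2 ->
  exists b, incident_to (contour_edges w C1) b /\ infinite_set (cluster_of w b).
Proof.
move=> hw h1 h2 hne; apply: (infinite_cluster_incident hw
  (infinite_contour_edge_contour h1) (infinite_contour_edge_contour h2)).
by move=> e he1 he2; apply: hne; exact: (contours_with_common_edge h1.1 h2.1 he1 he2).
Qed.

Theorem lemma2p5 (R : realType) (w : config) (hw : in_Omega w) :
  (* (I) *)
  ((exists C1 C2 : set (R * R),
      [/\ infinite_contour w C1, infinite_contour w C2 & C1 <> C2]) ->
   exists xi, infinite_cluster w xi)
  (* (II) *)
  /\ (forall C1 C2 : set (R * R),
        infinite_contour w C1 -> infinite_contour w C2 -> C1 <> C2 ->
        exists xi, infinite_cluster w xi /\ is_incident w xi C1)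
  (* (III) *)
  /\ (forall (xi : set vtx) (C1 C2 : set (R * R)),
        is_cluster w xi -> infinite_contour w C1 -> infinite_contour w C2 ->
        C1 <> C2 -> is_incident w xi C1 -> is_incident w xi C2 ->
        infinite_set xi)
  (* (IV) *)
  /\ (forall (C1 : set (R * R)) (CC : set (set (R * R))),
        infinite_contour w C1 -> CC !=set0 ->
        (forall C, CC C -> infinite_contour w C) -> ~ CC C1 ->
        forall Rg : set (R * R),
          (exists p, Rg = connected_component (~` \bigcup_(C in CC) C) p) ->
          C1 `<=` Rg ->
          exists xi, infinite_cluster w xi /\ (forall v, xi v -> Rg (@vpt R v))).
Proof.
have infinite_of b : infinite_set (cluster_of w b) -> infinite_cluster w (cluster_of w b).
  by split => //; apply: cluster_of_is_cluster.
split.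
  move=> [C1 [C2 [h1 h2 hne]]].
  have [b [_ hinf]] := infinite_cluster_incident_contour hw h1 h2 hne.
  by exists (cluster_of w b); apply: infinite_of.
split.
  move=> C1 C2 h1 h2 hne.
  have [b [hb hinf]] := infinite_cluster_incident_contour hw h1 h2 hne.
  by exists (cluster_of w b); split; [apply: infinite_of | exact: incident_to_is_incident].
split.
  move=> xi C1 C2 hxi h1 h2 hne hi1 hi2 hfin.
  have [v1 hv1 hinc1] := is_incident_incident_to hi1.
  have [v2 hv2 hinc2] := is_incident_incident_to hi2.
  rewrite (is_cluster_cluster_of hxi hv1) in hfin hv2.
  have [e [he1 he2]] := finite_cluster_incident_contours hw
    (infinite_contour_edge_contour h1) (infinite_contour_edge_contour h2)
    hfin (cluster_of_refl w v1) hv2 hinc1 hinc2.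
  exact: hne (contours_with_common_edge h1.1 h2.1 he1 he2).
move=> C1 CC h1 [C2 hC2] hCC hn Rg [p hRg] hsub.
have hne : C1 <> C2 by move=> h; apply: hn; rewrite h.
have [b [hb hinf]] := infinite_cluster_incident_contour hw h1 (hCC _ hC2) hne.
exists (cluster_of w b); split; first exact: infinite_of.
by apply: (cluster_in_region h1.1 _ hn hRg hsub hb) => C /hCC [].
Qed.
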